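(* For every complex Banach space $X$ with open unit ball $B$ and every $f\in A_u(B)$, $$Cl_B(f,0)=\bigcap_{Y}\widehat{f|_{B_Y}}\big(M_0(B_Y)\big),$$ where the intersection runs over all closed subspaces $Y\subset X$ with $\dim(X/Y)<\infty$, $B_Y$ denotes the open unit ball of $Y$, and $M_0(B_Y)$ is the fiber over $0$ of the spectrum of $A_u(B_Y)$.
   Context: For a Banach space $Z$ with open unit ball $B_Z$, $A_u(B_Z)$ is the uniform algebra of bounded holomorphic functions on $B_Z$ that are uniformly continuous; $M_0(B_Z)$ is the set of nonzero multiplicative linear functionals $\tau$ on $A_u(B_Z)$ with $\tau(z^* )=0$ for every $z^*\in Z^*$; $\hat g(\tau)=\tau(g)$ is the Gelfand transform. $Cl_{B}(f,0)$ is the set of all limits $\lim_\alpha f(x_\alpha)$ over nets $(x_\alpha)$ in $B$ converging weakly to $0$. *)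

From mathcomp Require Import all_boot all_algebra.
From mathcomp Require Import complex.
From mathcomp Require Import all_classical all_reals all_analysis.

Set Implicit Arguments.
Unset Strict Implicit.
Unset Printing Implicit Defensive.

Import GRing.Theory Num.Theory.
Local Open Scope classical_set_scope.
Local Open Scope ring_scope.

Section Defs.
Variables (R : realType) (X : completeNormedModType R[i]).

Definition unit_ball : set X := [set x | `|x| < 1].

Definition is_subspace (Y : set X) : Prop :=
  Y 0 /\ forall (a : R[i]) (x y : X), Y x -> Y y -> Y (a *: x + y).

(* dim (X / Y) < oo : X = Y + span(v_0, ..., v_{n-1}) for finitely many v_i *)
Definition finite_codim (Y : set X) : Prop :=
  exists (n : nat) (v : 'I_n -> X), forall x : X,
    exists (y : X) (c : 'I_n -> R[i]), Y y /\ x = y + \sum_(i < n) c i *: v i.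

Definition linear_on (Y : set X) (L : X -> R[i]) : Prop :=
  forall (a : R[i]) (x y : X), Y x -> Y y -> L (a *: x + y) = a * L x + L y.

(* L restricted to Y is a continuous linear functional on Y, i.e. L|_Y in Y^* *)
Definition dual_on (Y : set X) (L : X -> R[i]) : Prop :=
  linear_on Y L /\ exists M : R[i], forall h, Y h -> `|L h| <= M * `|h|.

Definition ball_of (Y : set X) : set X := unit_ball `&` Y.

(* g is (Frechet) holomorphic on B_Y as a function on the normed space Y *)
Definition holomorphic_on (Y : set X) (g : X -> R[i]) : Prop :=
  forall x, ball_of Y x -> exists L : X -> R[i], dual_on Y L /\
    forall eps : R[i], 0 < eps -> exists delta : R[i], 0 < delta /\
      forall h, Y h -> `|h| < delta ->
        `|g (x + h) - g x - L h| <= eps * `|h|.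

Definition in_Au (Y : set X) (g : X -> R[i]) : Prop :=
  [/\ holomorphic_on Y g,
      (exists M : R[i], forall x, ball_of Y x -> `|g x| <= M) &
      (forall eps : R[i], 0 < eps -> exists delta : R[i], 0 < delta /\
         forall x y, ball_of Y x -> ball_of Y y -> `|x - y| < delta ->
           `|g x - g y| < eps)].

(* Elements of A_u(B_Y) are represented by functions X -> C whose
   restriction to B_Y lies in A_u(B_Y); tau must only depend on that
   restriction. *)
Definition character_of (Y : set X) (tau : (X -> R[i]) -> R[i]) : Prop :=
  [/\ (forall g h, in_Au Y g -> in_Au Y h ->
         (forall x, ball_of Y x -> g x = h x) -> tau g = tau h),
      (forall (a : R[i]) g h, in_Au Y g -> in_Au Y h ->
         tau (fun x => a * g x + h x) = a * tau g + tau h),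
      (forall g h, in_Au Y g -> in_Au Y h ->
         tau (fun x => g x * h x) = tau g * tau h) &
      (exists g, in_Au Y g /\ tau g <> 0)].

Definition M0 (Y : set X) (tau : (X -> R[i]) -> R[i]) : Prop :=
  character_of Y tau /\ (forall z, dual_on Y z -> tau z = 0).

(* Cl_B(f,0): limits lim f(x_a) over nets (x_a) in B converging weakly to 0 *)
Definition cluster_set_0 (f : X -> R[i]) (lam : R[i]) : Prop :=
  exists (I : Type) (le : I -> I -> Prop) (x : I -> X),
    inhabited I /\
    (forall i, le i i) /\
    (forall i j k, le i j -> le j k -> le i k) /\
    (forall i j, exists k, le i k /\ le j k) /\
    (forall i, unit_ball (x i)) /\
    (forall z, dual_on setT z -> forall eps : R[i], 0 < eps ->
       exists i0, forall i, le i0 i -> `|z (x i)| < eps) /\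
    (forall eps : R[i], 0 < eps ->
       exists i0, forall i, le i0 i -> `|f (x i) - lam| < eps).

End Defs.

From mathcomp Require Import all_boot all_order all_algebra.
From mathcomp Require Import complex.
From mathcomp Require Import all_classical all_reals all_analysis.
From mathcomp Require Import ring.
From Stdlib Require List.
Import Order.TTheory GRing.Theory Num.Theory numFieldNormedType.Exports.
Local Open Scope classical_set_scope.
Local Open Scope ring_scope.

(* Let [Y] be closed of finite codimension and let [x_a] in [B] tend weakly
   to 0 with [f (x_a) -> lam].  The coordinates of [x_a] along a
   finite-dimensional complement of [Y] tend to 0 in norm, so slightly shrunk
   projections [y_a] of [x_a] lie in [B_Y], are still weakly null, and
   [f (y_a) -> lam] by uniform continuity; an ultrafilter limit of
   [g |-> g (y_a)] is then a character in [M_0(B_Y)] sending [f] to [lam].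
   Conversely, a character [tau] with [tau f = lam] forces [|f - lam|] to
   take arbitrarily small values on [B_Y].  Doing this for the common kernels
   [Y] of finite families of functionals produces a net tending weakly to 0
   along which [f -> lam]. *)

Section ComplexBounds.
Context {R : realType}.
Local Notation C := R[i].

Lemma gt0_complexE (e : C) : 0 < e -> e = ((complex.Re e)%:C)%C /\ 0 < complex.Re e.
Proof.
move=> e0; have er : e \is Num.real by apply: gtr0_real.
by rewrite -ltcR !(RRe_real er).
Qed.

Lemma normc_real (x : R) : `|(x%:C)%C| = ((`|x|)%:C)%C :> C.
Proof. by rewrite normc_def /= expr0n /= addr0 sqrtr_sqr. Qed.

Lemma normc_le_ReIm (z : C) :
  `|z| <= ((`|complex.Re z|)%:C)%C + ((`|complex.Im z|)%:C)%C.
Proof.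
rewrite {1}[z]complexE; apply: le_trans (ler_normD _ _) _.
rewrite normrM normc_real.
suff -> : `|'i%C : C| = 1 by rewrite mul1r normc_real.
by rewrite normc_def /= expr0n expr1n add0r sqrtr1.
Qed.

Lemma normc_ge_Im (z : C) : ((`|complex.Im z|)%:C)%C <= `|z|.
Proof.
rewrite normc_def lecR -sqrtr_sqr ler_sqrt ?lerDr ?sqr_ge0 //.
by rewrite addr_ge0 ?sqr_ge0.
Qed.

Lemma normc_small_eq0 (z : C) : (forall e : C, 0 < e -> `|z| < e) -> z = 0.
Proof.
move=> H; apply/eqP; apply: contraT => nz.
by have := H `|z|; rewrite normr_gt0 nz ltxx; apply.
Qed.

Lemma invSn_lt {e : C} : 0 < e -> exists N : nat, (N.+1%:R : C)^-1 < e.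
Proof.
move=> /gt0_complexE [-> e0]; have [k] := ltr_add_invr e0; rewrite add0r => Hk.
by exists k; rewrite -(rmorph_nat (real_complex R)) -fmorphV ltcR.
Qed.

Lemma lef_invSn {N k : nat} : (N <= k)%N -> (k.+1%:R : C)^-1 <= (N.+1%:R)^-1.
Proof. by move=> Nk; rewrite lef_pV2 ?posrE ?ltr0n // ler_nat ltnS. Qed.

Lemma normcV_le {z c : C} : 0 < c -> c <= `|z| -> `|z^-1| <= c^-1.
Proof.
move=> c0 cz; have z0 : 0 < `|z| by apply: lt_le_trans cz.
by rewrite normfV lef_pV2 ?posrE.
Qed.

Lemma exists_pos_le2 {a b : C} : 0 < a -> 0 < b ->
  exists c, [/\ 0 < c, c <= a & c <= b].
Proof.
move=> a0 b0; have ab0 : 0 < a + b by rewrite addr_gt0.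
exists (a * b / (a + b)); split.
- by rewrite divr_gt0 // mulr_gt0.
- by rewrite ler_pdivrMr // ler_pM2l // lerDr ltW.
- by rewrite ler_pdivrMr // mulrC ler_pM2l // lerDl ltW.
Qed.

End ComplexBounds.

(* [R[i]] carries no canonical topology, so limits along a filter are stated
   in epsilon form. *)
Definition ulim {R : realType} {I : Type} (U : set_system I) (h : I -> R[i])
  (l : R[i]) := forall e : R[i], 0 < e -> U [set i | `|h i - l| < e].

Section UltraLimits.
Context {R : realType} {I : Type} {U : set_system I}.
Local Notation C := R[i].

Lemma ultra_segment_lim {a b : R} {g : I -> R} : UltraFilter U ->
  (forall i, g i \in `[a, b]) ->
  exists l : R, forall e : R, 0 < e -> U [set i | `|l - g i| < e].
Proof.
move=> UU gab; have UF : ProperFilter U by case: UU.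
have [|l [_ cll]] := @segment_compact R a b (g @ U) _.
  suff : U (g @^-1` `[a, b]%classic) by [].
  by apply: filterE => i; have := gab i; rewrite inE.
exists l => e e0.
have [//|Uc] := in_ultra_setVsetC [set i | `|l - g i| < e] UU.
have nb : nbhs l [set x : R | `|l - x| < e].
  by have := nbhsx_ballx l e e0; rewrite -ball_normE.
by have [x [/= ? ?]] := cll (~` [set x | `|l - x| < e]) _ Uc nb.
Qed.

Lemma ulim_bounded {h : I -> C} {M : C} :
  UltraFilter U -> (forall i, `|h i| <= M) -> exists l, ulim U h l.
Proof.
move=> UU hM; have UF : ProperFilter U by case: UU.
have [i0 _] := filter_ex (filterT : U setT).
have MR : M \is Num.real by apply: ger0_real; apply: le_trans (hM i0).
have partsM (p : C -> R) : (forall z, ((`|p z|)%:C)%C <= `|z|) ->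
    forall i, p (h i) \in `[- complex.Re M, complex.Re M].
  move=> pz i; rewrite in_itv /= -ler_norml -lecR (RRe_real MR).
  exact: le_trans (pz _) (hM i).
have [a Ha] := ultra_segment_lim UU (partsM _ (@normc_ge_Re R)).
have [b Hb] := ultra_segment_lim UU (partsM _ (@normc_ge_Im R)).
exists (a +i* b)%C => e /gt0_complexE [-> e0].
have e20 : 0 < complex.Re e / 2 by rewrite divr_gt0.
apply: filterS (filterI (Ha _ e20) (Hb _ e20)) => i /= [Hre Him].
apply: le_lt_trans (normc_le_ReIm _) _.
move: Hre Him; case: (h i) => x y /= Hre Him.
by rewrite -rmorphD ltcR (splitr (complex.Re e)) ltrD // distrC.
Qed.

Context {PU : ProperFilter U}.
Implicit Types (g h : I -> C) (a c lg lh : C).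

Lemma ulim_unique {h} {l1 l2 : C} : ulim U h l1 -> ulim U h l2 -> l1 = l2.
Proof.
move=> H1 H2; apply/eqP; rewrite -subr_eq0; apply/eqP.
apply: normc_small_eq0 => e e0; have e20 : 0 < e / 2 by rewrite divr_gt0.
have [i /= [A B]] := filter_ex (filterI (H1 _ e20) (H2 _ e20)).
rewrite (splitr e); apply: le_lt_trans (ltrD A B).
by rewrite -(distrC l1); apply: ler_distD.
Qed.

Lemma ulim_cst c : ulim U (fun _ => c) c.
Proof. by move=> e e0; apply: filterE => i /=; rewrite subrr normr0. Qed.

Lemma ulim_lin {a g h lg lh} : ulim U g lg -> ulim U h lh ->
  ulim U (fun i => a * g i + h i) (a * lg + lh).
Proof.
move=> Hg Hh e e0; have a10 : 0 < `|a| + 1 by rewrite ltr_pwDr.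
have e2 : 0 < e / 2 by rewrite divr_gt0.
have e2a : 0 < e / 2 / (`|a| + 1) by rewrite divr_gt0.
apply: filterS (filterI (Hg _ e2a) (Hh _ e2)) => i /= [A B].
have -> : a * g i + h i - (a * lg + lh) = a * (g i - lg) + (h i - lh) by ring.
apply: le_lt_trans (ler_normD _ _) _; rewrite (splitr e) ltr_leD ?ltW //.
rewrite normrM; apply: le_lt_trans (ler_wpM2l (normr_ge0 _) (ltW A)) _.
by rewrite mulrCA gtr_pMr // ltr_pdivrMr // mul1r ltrDl.
Qed.

Lemma ulim_mul {g h lg lh} {M : C} : (forall i, `|g i| <= M) ->
  ulim U g lg -> ulim U h lh -> ulim U (fun i => g i * h i) (lg * lh).
Proof.
move=> gM Hg Hh e e0; have [i0 _] := filter_ex (filterT : U setT).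
have M0 : 0 <= M by apply: le_trans (gM i0).
have d0 : 0 < M + `|lh| + 1 by rewrite ltr_pwDr // addr_ge0.
have e1 : 0 < e / (M + `|lh| + 1) by rewrite divr_gt0.
apply: filterS (filterI (Hg _ e1) (Hh _ e1)) => i /= [A B].
have -> : g i * h i - lg * lh = g i * (h i - lh) + lh * (g i - lg) by ring.
apply: le_lt_trans (ler_normD _ _) _; rewrite !normrM.
have H1 : `|g i| * `|h i - lh| <= M * (e / (M + `|lh| + 1)).
  by apply: ler_pM => //; apply: ltW.
have H2 : `|lh| * `|g i - lg| <= `|lh| * (e / (M + `|lh| + 1)).
  by apply: ler_wpM2l => //; apply: ltW.
apply: le_lt_trans (lerD H1 H2) _.
by rewrite -mulrDl mulrCA gtr_pMr // ltr_pdivrMr // mul1r ltrDl.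
Qed.

End UltraLimits.

Lemma norm_inv_linearization {R : realType} (a b l e : R[i]) :
  0 < e -> e <= `|a| -> e / 2 <= `|b| ->
  `|b^-1 - a^-1 + l / (a * a)| <=
    2 / (e * e) * `|b - a - l| + 2 / (e * e * e) * (`|b - a| * `|l|).
Proof.
move=> e0 ea eb; have e20 : 0 < e / 2 by rewrite divr_gt0.
have a0 : a != 0 by rewrite -normr_gt0 (lt_le_trans e0).
have b0 : b != 0 by rewrite -normr_gt0 (lt_le_trans e20).
have Va := normcV_le e0 ea; have Vb := normcV_le e20 eb.
have -> : b^-1 - a^-1 + l / (a * a) =
    - ((b - a - l) * (a^-1 * b^-1)) + (b - a) * l * (a^-1 * a^-1 * b^-1).
  by field; rewrite a0 b0.
apply: le_trans (ler_normD _ _) _; rewrite normrN !normrM; apply: lerD.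
- rewrite mulrC; apply: ler_wpM2r => //.
  have -> : 2 / (e * e) = e^-1 * (e / 2)^-1 by field; rewrite lt0r_neq0.
  exact: ler_pM.
- rewrite mulrC; apply: ler_wpM2r; first by rewrite mulr_ge0.
  have -> : 2 / (e * e * e) = e^-1 * e^-1 * (e / 2)^-1.
    by field; rewrite lt0r_neq0.
  by apply: ler_pM; rewrite ?mulr_ge0 //; apply: ler_pM.
Qed.

Section UniformAlgebra.
Context {R : realType} {X : completeNormedModType R[i]}.
Local Notation C := R[i].
Implicit Types (Y : set X) (g : X -> C) (L : X -> C).

Definition derivative_at Y g (x : X) L :=
  forall eps : C, 0 < eps -> exists delta : C, 0 < delta /\
    forall h, Y h -> `|h| < delta -> `|g (x + h) - g x - L h| <= eps * `|h|.

Lemma dual_on_bound {Y L} : dual_on Y L ->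
  exists K : C, 0 <= K /\ forall h, Y h -> `|L h| <= K * `|h|.
Proof.
move=> [_ [M HM]]; exists `|M|; split => // h Yh.
apply: le_trans (HM h Yh) _.
have M0 : 0 <= M * `|h| by apply: le_trans (HM h Yh).
by rewrite -(ger0_norm M0) normrM normr_id.
Qed.

Lemma derivative_lipschitz {Y g x L K} : derivative_at Y g x L ->
  (forall h, Y h -> `|L h| <= K * `|h|) ->
  exists d : C, 0 < d /\
    forall h, Y h -> `|h| < d -> `|g (x + h) - g x| <= (1 + K) * `|h|.
Proof.
move=> dg LK; have [d [d0 Hd]] := dg 1 ltr01.
exists d; split => // h Yh hd.
rewrite -[g (x + h) - g x](subrK (L h)) mulrDl.
by apply: le_trans (ler_normD _ _) _; apply: lerD; [apply: Hd | apply: LK].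
Qed.

Lemma holomorphic_ge_near {Y g x} {e : C} : holomorphic_on Y g ->
  ball_of Y x -> 0 < e -> e <= `|g x| ->
  exists d, 0 < d /\ forall h, Y h -> `|h| < d -> e / 2 <= `|g (x + h)|.
Proof.
move=> Hg Bx e0 ge; have [L [dL dg]] := Hg x Bx.
have [K [K0 LK]] := dual_on_bound dL.
have [d1 [d10 Hd1]] := derivative_lipschitz dg LK.
have K10 : 0 < 1 + K by rewrite ltr_pwDl.
have d20 : 0 < e / 2 / (1 + K) by rewrite !divr_gt0.
have [d [d0 dd1 dd2]] := exists_pos_le2 d10 d20.
exists d; split => // h Yh hd.
have near : `|g (x + h) - g x| <= e / 2.
  apply: le_trans (Hd1 h Yh (lt_le_trans hd dd1)) _.
  by rewrite mulrC -ler_pdivlMr // ltW // (lt_le_trans hd).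
rewrite -(lerD2r (e / 2)) -splitr; apply: le_trans ge _.
apply: le_trans (lerD (lexx _) near).
have := ler_distD (g (x + h)) (g x) 0.
by rewrite !subr0 (distrC (g x)) addrC.
Qed.

Lemma dual_on_cst0 Y : dual_on Y (fun _ => 0).
Proof.
split; first by move=> a u v _ _; rewrite mulr0 addr0.
by exists 0 => h _; rewrite normr0 mul0r.
Qed.

Lemma Au_cst Y (c : C) : in_Au Y (fun _ => c).
Proof.
split.
- move=> x _; exists (fun _ => 0); split; first exact: dual_on_cst0.
  move=> eps e0; exists 1; split => // h _ _.
  by rewrite subrr subr0 normr0 mulr_ge0 // ltW.
- by exists `|c|.
- by move=> eps e0; exists 1; split => // x y _ _ _; rewrite subrr normr0.
Qed.

Lemma Au_subspace {Y g} : in_Au setT g -> in_Au Y g.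
Proof.
move=> [Hg [M HM] Hu]; split.
- move=> x [Bx _]; have [L [[Ll [K LK]] dg]] := Hg x (conj Bx I).
  exists L; split.
    by split; [move=> a u v _ _; apply: Ll | exists K => h _; apply: LK].
  move=> eps e0; have [d [d0 Hd]] := dg eps e0.
  by exists d; split => // h _; apply: Hd.
- by exists M => x [Bx _]; apply: HM.
- move=> eps e0; have [d [d0 Hd]] := Hu eps e0.
  by exists d; split => // x y [Bx _] [By _]; apply: Hd.
Qed.

Lemma Au_addl Y (c : C) g : in_Au Y g -> in_Au Y (fun x => c + g x).
Proof.
move=> [Hg [M HM] Hu]; split.
- move=> x Bx; have [L [dL dg]] := Hg x Bx; exists L; split => //.
  move=> eps e0; have [d [d0 Hd]] := dg eps e0.
  exists d; split => // h Yh hd.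
  by have := Hd h Yh hd; rewrite opprD addrACA subrr add0r.
- exists (`|c| + M) => x Bx; apply: le_trans (ler_normD _ _) _.
  by rewrite lerD2l; apply: HM.
- move=> eps e0; have [d [d0 Hd]] := Hu eps e0.
  exists d; split => // x y Bx By xy.
  by rewrite opprD addrACA subrr add0r; apply: Hd.
Qed.

Section BoundedBelow.
Context {Y : set X} {g : X -> C} {e : C}.
Hypotheses (e0 : 0 < e) (ge : forall x, ball_of Y x -> e <= `|g x|).

Let g_neq0 x : ball_of Y x -> g x != 0.
Proof. by move=> Bx; rewrite -normr_gt0 (lt_le_trans e0) // ge. Qed.

Lemma Au_mulV : in_Au Y g -> in_Au Y (fun x => g x * (g x)^-1).
Proof.
move=> [Hg _ _]; split.
- move=> x Bx; exists (fun _ => 0); split; first exact: dual_on_cst0.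
  move=> eps eps0; have [d [d0 Hd]] := holomorphic_ge_near Hg Bx e0 (ge _ Bx).
  exists d; split => // h Yh hd; have e20 : 0 < e / 2 by rewrite divr_gt0.
  have gxh0 : g (x + h) != 0 by rewrite -normr_gt0 (lt_le_trans e20) // Hd.
  rewrite (divff gxh0) (divff (g_neq0 _ Bx)) subrr subr0 normr0.
  by rewrite mulr_ge0 // ltW.
- by exists 1 => x Bx; rewrite divff ?g_neq0 // normr1.
- move=> eps eps0; exists 1; split => // x y Bx By _.
  by rewrite !divff ?g_neq0 // subrr normr0.
Qed.

Lemma holomorphic_inv : holomorphic_on Y g ->
  holomorphic_on Y (fun x => (g x)^-1).
Proof.
move=> Hg x Bx; set a := g x; have [L [dL dg]] := Hg x Bx.
have [Ll _] := dL; have [K [K0 LK]] := dual_on_bound dL.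
have [d1 [d10 Hd1]] := derivative_lipschitz dg LK.
have [d4 [d40 Hd4]] := holomorphic_ge_near Hg Bx e0 (ge _ Bx).
exists (fun h => - (L h / (a * a))); split.
  split; first by move=> c u v Yu Yv; rewrite Ll //; ring.
  exists (K / `|a * a|) => h Yh.
  by rewrite normrN normrM normfV mulrAC ler_wpM2r ?invr_ge0 ?LK.
move=> eps eps0; have K10 : 0 < 1 + K by rewrite ltr_pwDl.
have eta0 : 0 < eps * (e * e) / 4 by rewrite !mulr_gt0 ?invr_gt0.
have [d2 [d20 Hd2]] := dg _ eta0.
have d30 : 0 < eps * (e * e * e) / (4 * (1 + K) * (1 + K)).
  by rewrite divr_gt0 ?mulr_gt0.
have [d12 [d120 d12a d12b]] := exists_pos_le2 d10 d20.
have [d34 [d340 d34a d34b]] := exists_pos_le2 d30 d40.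
have [d [d0 da db]] := exists_pos_le2 d120 d340.
exists d; split => // h Yh hd.
have hd1 : `|h| < d1 by apply: lt_le_trans hd (le_trans da d12a).
have hd2 : `|h| < d2 by apply: lt_le_trans hd (le_trans da d12b).
have hd3 : `|h| < eps * (e * e * e) / (4 * (1 + K) * (1 + K)).
  by apply: lt_le_trans hd (le_trans db d34a).
have hd4 : `|h| < d4 by apply: lt_le_trans hd (le_trans db d34b).
rewrite /= opprK.
apply: le_trans (norm_inv_linearization _ _ (L h) _ e0 (ge _ Bx) (Hd4 _ Yh hd4)) _.
rewrite [eps * _](_ : _ = eps / 2 * `|h| + eps / 2 * `|h|); last first.
  by rewrite -mulrDl -splitr.
apply: lerD.
- apply: le_trans (ler_wpM2l _ (Hd2 _ Yh hd2)) _.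
    by rewrite divr_ge0 ?mulr_ge0 // ltW.
  rewrite (_ : 2 / (e * e) * (eps * (e * e) / 4 * `|h|) = eps / 2 * `|h|) //.
  by field; rewrite lt0r_neq0.
- have LhK : `|L h| <= (1 + K) * `|h|.
    by apply: le_trans (LK _ Yh) _; rewrite ler_wpM2r // lerDr.
  apply: le_trans (ler_wpM2l _ (ler_pM _ _ (Hd1 _ Yh hd1) LhK)) _ => //.
    by rewrite divr_ge0 ?mulr_ge0 // ltW.
  rewrite (_ : 2 / (e * e * e) * ((1 + K) * `|h| * ((1 + K) * `|h|)) =
    2 * (1 + K) * (1 + K) / (e * e * e) * `|h| * `|h|); last by ring.
  apply: ler_wpM2r => //; rewrite mulrC -ler_pdivlMr; last first.
    by rewrite divr_gt0 ?mulr_gt0.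
  apply: le_trans (ltW hd3) _; rewrite le_eqVlt; apply/orP; left; apply/eqP.
  by field; rewrite !lt0r_neq0.
Qed.

Lemma Au_inv : in_Au Y g -> in_Au Y (fun x => (g x)^-1).
Proof.
move=> [Hg _ Hu]; split; first exact: holomorphic_inv.
  by exists e^-1 => x Bx; apply: normcV_le => //; apply: ge.
move=> eps eps0; have ee0 : 0 < eps * (e * e) by rewrite !mulr_gt0.
have [d [d0 Hd]] := Hu _ ee0; exists d; split => // x y Bx By xy.
have -> : (g x)^-1 - (g y)^-1 = (g y - g x) * ((g x)^-1 * (g y)^-1).
  by field; rewrite !g_neq0.
have gV : `|(g x)^-1 * (g y)^-1| <= e^-1 * e^-1.
  by rewrite normrM; apply: ler_pM => //; apply: normcV_le => //; apply: ge.
rewrite normrM distrC; apply: le_lt_trans (ler_wpM2l (normr_ge0 _) gV) _.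
rewrite -(ltr_pM2r (_ : 0 < e * e)) ?mulr_gt0 //.
have -> : `|g x - g y| * (e^-1 * e^-1) * (e * e) = `|g x - g y|.
  by field; rewrite lt0r_neq0.
exact: Hd.
Qed.

End BoundedBelow.
End UniformAlgebra.

Section Characters.
Context {R : realType} {X : completeNormedModType R[i]}.
Local Notation C := R[i].
Context {Y : set X} {tau : (X -> C) -> C}.
Hypothesis tau_char : character_of Y tau.

Lemma character_one : tau (fun _ => 1) = 1.
Proof.
case: tau_char => _ _ tauM [g0 [Ag0 tg0]].
have := tauM g0 (fun _ => 1) Ag0 (Au_cst Y 1).
under [fun x => _]funext => x do rewrite mulr1.
by move=> tg0E; apply: (mulfI (introN eqP tg0)); rewrite mulr1 -tg0E.
Qed.

(* If [|f - tau f|] were bounded below on [B_Y], [f - tau f] would be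
   invertible in [A_u(B_Y)] while [tau] kills it. *)
Lemma character_approx_value {f : X -> C} {e : C} : in_Au Y f -> 0 < e ->
  exists2 x, ball_of Y x & `|f x - tau f| < e.
Proof.
move=> Af e0; apply: contrapT => far.
pose g x := - tau f * 1 + f x.
have ge x : ball_of Y x -> e <= `|g x|.
  move=> Bx; rewrite /g mulr1 addrC (real_leNgt (gtr0_real e0) (normr_real _)).
  by apply/negP => close; apply: far; exists x.
have Ag : in_Au Y g by apply: Au_addl.
have tg : tau g = 0.
  case: tau_char => _ tauL _ _.
  transitivity (- tau f * tau (fun _ => 1) + tau f).
    exact: tauL (Au_cst Y 1) Af.
  by rewrite character_one mulr1 addNr.
case: tau_char => tauE _ tauM _.
have := tauM _ _ Ag (Au_inv e0 ge Ag); rewrite tg mul0r.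
rewrite (tauE _ (fun _ => 1) (Au_mulV e0 ge Ag) (Au_cst Y 1)) ?character_one.
  by move/eqP; rewrite oner_eq0.
by move=> x Bx; rewrite divff // -normr_gt0 (lt_le_trans e0) ?ge.
Qed.

End Characters.

Section CommonKernels.
Context {R : realType} {X : completeNormedModType R[i]}.
Local Notation C := R[i].

Lemma linear_on0 {Y : set X} {z : X -> C} : Y 0 -> linear_on Y z -> z 0 = 0.
Proof.
move=> Y0 zl; have := zl 1 0 0 Y0 Y0; rewrite scale1r addr0 mul1r => z00.
by apply: (@addrI _ (z 0)); rewrite -z00 addr0.
Qed.

Lemma linear_onB (z : X -> C) (x y : X) :
  linear_on setT z -> z (x - y) = z x - z y.
Proof. by move=> zl; rewrite addrC -scaleN1r zl // mulN1r addrC. Qed.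

Definition common_kernel (s : seq (X -> C)) : set X :=
  [set x | forall z, List.In z s -> dual_on setT z -> z x = 0].

Lemma common_kernel_subspace s : is_subspace (common_kernel s).
Proof.
split; first by move=> z _ [zl _]; apply: (linear_on0 _ zl).
move=> a x y kx ky z zs dz; have [zl _] := dz.
by rewrite zl // kx // ky // mulr0 addr0.
Qed.

Lemma common_kernel_closed s : closed (common_kernel s).
Proof.
move=> x clx z zs dz; have [zl _] := dz.
have [K [K0 HK]] := dual_on_bound dz.
apply: normc_small_eq0 => e e0; have K10 : 0 < K + 1 by rewrite ltr_pwDr.
have r0 : 0 < e / (K + 1) by rewrite divr_gt0.
have [y [ky]] := clx _ (nbhsx_ballx x _ r0); rewrite -ball_normE /= => xy.
have -> : z x = z (x - y) by rewrite linear_onB // (ky z zs dz) subr0.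
apply: le_lt_trans (HK _ I) _.
apply: le_lt_trans (ler_wpM2l K0 (ltW xy)) _.
by rewrite mulrCA gtr_pMr // ltr_pdivrMr // mul1r ltrDl.
Qed.

Lemma finite_codim_sub {Y Y' : set X} : Y `<=` Y' ->
  finite_codim Y -> finite_codim Y'.
Proof.
move=> sub [n [v Hv]]; exists n, v => x.
by have [y [c [Yy ->]]] := Hv x; exists y, c; split => //; apply: sub.
Qed.

(* A new generator [u] with [z u = 1] absorbs the [z]-component of [Y]. *)
Lemma finite_codimI_kernel {Y : set X} {z : X -> C} : is_subspace Y ->
  linear_on setT z -> finite_codim Y -> finite_codim (Y `&` [set x | z x = 0]).
Proof.
move=> [Y0 Ys] zl [n [v Hv]].
have [[w [Yw zw]]|zY0] := pselect (exists w, Y w /\ z w <> 0); last first.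
  exists n, v => x; have [y [c [Yy ->]]] := Hv x; exists y, c; split => //.
  by split => //=; apply: contrapT => zy; apply: zY0; exists y.
pose u := (z w)^-1 *: w + 0.
have Yu : Y u by apply: Ys.
have zu : z u = 1.
  by rewrite zl // (linear_on0 _ zl) // addr0 mulVf //; apply/eqP.
exists n.+1, (fun i => if unlift ord0 i is Some j then v j else u) => x.
have [y [c [Yy ->]]] := Hv x.
exists ((- z y) *: u + y), (fun i => if unlift ord0 i is Some j then c j else z y).
split; first by split; [apply: Ys | rewrite /= zl // zu mulr1 addNr].
rewrite big_ord_recl unlift_none.
under [X in _ = _ + (_ + X)]eq_bigr => i _ do rewrite liftK.
by rewrite scaleNr -addrA addrCA addKr.
Qed.

Lemma common_kernel_codim s : finite_codim (common_kernel s).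
Proof.
elim: s => [|z s IH].
  exists 0%N, (fun _ => 0) => x; exists x, (fun _ => 0).
  by split => //; rewrite big_ord0 addr0.
have [dz|ndz] := pselect (dual_on setT z); last first.
  by apply: (finite_codim_sub _ IH) => x kx w /= [<-|ws] dw //; apply: kx.
have [zl _] := dz.
apply: (finite_codim_sub _ (finite_codimI_kernel (common_kernel_subspace s) zl IH)).
by move=> x [kx zx] w /= [<-|ws] dw //; apply: kx.
Qed.

Lemma common_kernel_near_value {f : X -> C} {lam : C} (s : seq (X -> C))
    {e : C} : in_Au setT f ->
  (forall Y : set X, is_subspace Y -> closed Y -> finite_codim Y ->
     exists tau, M0 Y tau /\ tau f = lam) ->
  0 < e -> exists2 x, ball_of (common_kernel s) x & `|f x - lam| < e.
Proof.
move=> Af fibers e0; have [tau [[tau_char _] <-]] := fibers _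
  (common_kernel_subspace s) (common_kernel_closed s) (common_kernel_codim s).
exact: (character_approx_value tau_char (Au_subspace Af) e0).
Qed.

Lemma cluster_set_of_fibers (f : X -> C) (lam : C) : in_Au setT f ->
  (forall Y : set X, is_subspace Y -> closed Y -> finite_codim Y ->
     exists tau, M0 Y tau /\ tau f = lam) ->
  cluster_set_0 f lam.
Proof.
move=> Af fibers.
pose near_lam (p : seq (X -> C) * nat) x :=
  ball_of (common_kernel p.1) x /\ `|f x - lam| < (p.2.+1%:R)^-1.
have near_lamP p : exists x, near_lam p x.
  have e0 : 0 < (p.2.+1%:R : C)^-1 by rewrite invr_gt0 ltr0n.
  by have [x Bx fx] := common_kernel_near_value p.1 Af fibers e0; exists x.
pose xs p := xget 0 (near_lam p).
have xsP p : near_lam p (xs p) := xgetPex 0 (near_lamP p).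
exists (seq (X -> C) * nat)%type,
  (fun p q => (forall z, List.In z p.1 -> List.In z q.1) /\ (p.2 <= q.2)%N), xs.
split; first exact: inhabits ([::], 0%N).
split; first by [].
split.
  move=> p q r [pq1 pq2] [qr1 qr2]; split; first by move=> z /pq1 /qr1.
  exact: leq_trans pq2 qr2.
split.
  move=> p q; exists (p.1 ++ q.1, maxn p.2 q.2).
  split; split; rewrite ?leq_maxl ?leq_maxr // => z zp; apply: List.in_or_app.
  - by left.
  - by right.
split; first by move=> p; case: (xsP p) => -[].
split.
  move=> z dz eps e0; exists ([:: z], 0%N) => p [sub _].
  have [[_ kx] _] := xsP p.
  by rewrite (kx z (sub z (or_introl erefl)) dz) normr0.
move=> eps /invSn_lt [k Hk]; exists ([::], k) => p [_ /= kp].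
by apply: lt_le_trans (xsP p).2 _; apply: le_trans (lef_invSn kp) (ltW Hk).
Qed.

End CommonKernels.

Section Complements.
Context {R : realType} {X : completeNormedModType R[i]}.
Local Notation C := R[i].

Lemma sub_sum_coef_linear {n} {c : 'I_n -> X -> C} (v : 'I_n -> X) :
  (forall i, linear_on setT (c i)) -> forall (a : C) x y,
  (a *: x + y) - \sum_i c i (a *: x + y) *: v i =
    a *: (x - \sum_i c i x *: v i) + (y - \sum_i c i y *: v i).
Proof.
move=> cl a x y; rewrite scalerBr addrACA -opprD scaler_sumr -big_split /=.
by congr (_ - _); apply: eq_bigr => i _; rewrite cl // scalerDl scalerA.
Qed.

Lemma sum_coef_bound {n} {c : 'I_n -> X -> C} (v : 'I_n -> X) :
  (forall i, dual_on setT (c i)) ->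
  exists K : C, 0 <= K /\ forall x, `|x - \sum_i c i x *: v i| <= K * `|x|.
Proof.
move=> dc; suff [K [K0 HK]] : exists K : C, 0 <= K /\
    forall x, `|\sum_i c i x *: v i| <= K * `|x|.
  exists (1 + K); split => [|x]; first by rewrite addr_ge0.
  by apply: le_trans (ler_normB _ _) _; rewrite mulrDl mul1r lerD.
elim: n c v dc => [|n IH] c v dc.
  by exists 0; split => // x; rewrite big_ord0 normr0 mul0r.
have [K1 [K10 HK1]] := IH _ (fun i => v (lift ord0 i)) (fun i => dc (lift ord0 i)).
have [K0 [K00 HK0]] := dual_on_bound (dc ord0).
exists (K0 * `|v ord0| + K1); split; first by rewrite addr_ge0 ?mulr_ge0.
move=> x; rewrite big_ord_recl; apply: le_trans (ler_normD _ _) _.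
by rewrite mulrDl lerD // normrZ mulrAC ler_wpM2r // HK0.
Qed.

Lemma closed_dist_gt0 {Y : set X} {w : X} : closed Y -> ~ Y w ->
  exists d : C, 0 < d /\ forall y, Y y -> d <= `|w - y|.
Proof.
move=> cY /(contra_not (@cY w)) /existsNP [B /not_implyP [/nbhs_ballP [r r0 rB]]].
move=> YB; exists r; split => // y Yy.
rewrite (real_leNgt (gtr0_real r0) (normr_real _)); apply/negP => wy.
by apply: YB; exists y; split => //; apply: rB; rewrite -ball_normE.
Qed.

Definition line_sum (Y : set X) (w : X) : set X :=
  [set u | exists y t, Y y /\ u = y + t *: w].

Section LineSum.
Context {Y : set X} {w : X} {d : C}.
Hypotheses (sY : is_subspace Y) (d0 : 0 < d) (dw : forall y, Y y -> d <= `|w - y|).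

Lemma line_sum_subspace : is_subspace (line_sum Y w).
Proof.
have [Y0 Ys] := sY; split; first by exists 0, 0; rewrite scale0r addr0.
move=> a _ _ [y1 [t1 [Y1 ->]]] [y2 [t2 [Y2 ->]]].
exists (a *: y1 + y2), (a * t1 + t2); split; first exact: Ys.
by rewrite scalerDr scalerDl scalerA addrACA.
Qed.

Lemma norm_line_ge {y} t : Y y -> `|t| * d <= `|y + t *: w|.
Proof.
move=> Yy; have [Y0 Ys] := sY; have [->|t0] := eqVneq t 0.
  by rewrite normr0 mul0r normr_ge0.
have Yy' : Y (- t^-1 *: y + 0) by apply: Ys.
have -> : y + t *: w = t *: (w - (- t^-1 *: y + 0)).
  by rewrite addr0 scaleNr scalerBr scalerN opprK scalerA divff // scale1r addrC.
by rewrite normrZ ler_wpM2l // dw.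
Qed.

(* Coefficients of approximants of a point of the closure stay bounded by
   [norm_line_ge]; an ultrafilter limit [t] of them gives [x - t w] in [Y]. *)
Lemma line_sum_closed : closed Y -> closed (line_sum Y w).
Proof.
move=> cY x clx.
pose approx k (p : X * C) :=
  Y p.1 /\ `|x - (p.1 + p.2 *: w)| < (k.+1%:R : C)^-1.
have approxP k : exists p, approx k p.
  have r0 : 0 < (k.+1%:R : C)^-1 by rewrite invr_gt0 ltr0n.
  have [u [[y [t [Yy ->]]] xu]] := clx _ (nbhsx_ballx x _ r0).
  by exists (y, t); split => //; move: xu; rewrite -ball_normE.
pose p k := xget (0, 0) (approx k).
have pP k : approx k (p k) := xgetPex (0, 0) (approxP k).
have t_bound k : `|(p k).2| <= (`|x| + 1) / d.
  have [Yk xk] := pP k; rewrite ler_pdivlMr //.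
  apply: le_trans (norm_line_ge _ Yk) _.
  apply: le_trans (_ : `|x| + `|x - ((p k).1 + (p k).2 *: w)| <= _).
    have := ler_distD x ((p k).1 + (p k).2 *: w) 0.
    by rewrite !subr0 [`|x| + _]addrC distrC.
  by rewrite lerD2l (le_trans (ltW xk)) // invf_le1 ?ler1n ?ltr0n.
have [U [UU sU]] := @ultraFilterLemma nat \oo _.
have PU : ProperFilter U by case: UU.
have [t Ht] := ulim_bounded UU t_bound.
exists (x - t *: w), t; split; last by rewrite subrK.
apply: cY => B /nbhs_ballP [r /= r0 rB].
have r20 : 0 < r / 2 by rewrite divr_gt0.
have eta0 : 0 < r / 2 / (`|w| + 1) by rewrite !divr_gt0 ?ltr_pwDr.
have [N HN] := invSn_lt r20.
have [k [/= kN kt]] := filter_ex (filterI (sU _ (nbhs_infty_ge N)) (Ht _ eta0)).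
have [Yk xk] := pP k; exists (p k).1; split => //; apply: rB.
rewrite -ball_normE /=.
have -> : x - t *: w - (p k).1 =
    (x - ((p k).1 + (p k).2 *: w)) + ((p k).2 - t) *: w.
  by rewrite scalerBl opprD !addrA subrK addrAC.
apply: le_lt_trans (ler_normD _ _) _; rewrite (splitr r) ltr_leD //.
  by apply: lt_le_trans xk (le_trans (lef_invSn kN) (ltW HN)).
rewrite normrZ; apply: le_trans (ler_wpM2r (normr_ge0 _) (ltW kt)) _.
by rewrite mulrAC -mulrA ger_pMr // ler_pdivrMr ?ltr_pwDr // mul1r lerDl.
Qed.

Lemma line_sum_coef : exists phi : X -> C, dual_on (line_sum Y w) phi /\
  forall u, line_sum Y w u -> Y (u - phi u *: w).
Proof.
have [Y0 Ys] := sY.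
pose phi u := xget 0 (fun t => Y (u - t *: w)).
have phiP u : line_sum Y w u -> Y (u - phi u *: w).
  move=> [y [t [Yy ->]]]; apply: (xgetPex 0 (P := fun s => Y (y + t *: w - s *: w))).
  by exists t; rewrite addrK.
have nYw : ~ Y w.
  by move=> /dw; rewrite subrr normr0 => /(lt_le_trans d0); rewrite ltxx.
have phi_uniq u t1 t2 : Y (u - t1 *: w) -> Y (u - t2 *: w) -> t1 = t2.
  move=> Y1 Y2; apply: contrapT => /eqP; rewrite -subr_eq0 => t12; apply: nYw.
  have := Ys ((t1 - t2)^-1) _ _ (Ys (- 1) _ _ Y1 Y2) Y0.
  rewrite addr0 scaleN1r opprB addrA subrK -scalerBl scalerA mulVf //.
  by rewrite scale1r.
exists phi; split => //; split.
  move=> a u1 u2 L1 L2; apply: (phi_uniq (a *: u1 + u2)).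
    by apply: phiP; apply: (line_sum_subspace.2).
  have -> : a *: u1 + u2 - (a * phi u1 + phi u2) *: w =
      a *: (u1 - phi u1 *: w) + (u2 - phi u2 *: w).
    by rewrite scalerDl -scalerA [in RHS]scalerBr opprD addrACA.
  by apply: Ys; apply: phiP.
exists d^-1 => _ [y [t [Yy ->]]].
have -> : phi (y + t *: w) = t.
  by apply: (phi_uniq (y + t *: w)); [apply: phiP; exists y, t | rewrite addrK].
by rewrite mulrC ler_pdivlMr // norm_line_ge.
Qed.

End LineSum.

Lemma line_sum_complement {Y : set X} (w : X) : is_subspace Y -> closed Y ->
  closed (line_sum Y w) /\ exists phi : X -> C,
    dual_on (line_sum Y w) phi /\ forall u, line_sum Y w u -> Y (u - phi u *: w).
Proof.
move=> sY cY; have [Y0 Ys] := sY; have [Yw|nYw] := pselect (Y w).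
  have -> : line_sum Y w = Y.
    apply/seteqP; split => [_ [y [t [Yy ->]]]|u Yu].
      by rewrite addrC; apply: Ys.
    by exists u, 0; rewrite scale0r addr0.
  split => //; exists (fun _ => 0); split => [|u Yu]; first exact: dual_on_cst0.
  by rewrite scale0r subr0.
have [d [d0 dw]] := closed_dist_gt0 cY nYw.
by split; [exact: (line_sum_closed sY d0 dw) | exact: (line_sum_coef sY d0 dw)].
Qed.

Lemma dual_on_comp {Y : set X} {phi : X -> C} {T : X -> X} {K : C} :
  dual_on Y phi -> (forall x, Y (T x)) ->
  (forall (a : C) x y, T (a *: x + y) = a *: T x + T y) ->
  (forall x, `|T x| <= K * `|x|) -> dual_on setT (fun x => phi (T x)).
Proof.
move=> dphi TY Tl TK; have [phil _] := dphi.
have [M [M0 phiM]] := dual_on_bound dphi.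
split; first by move=> a x y _ _; rewrite Tl phil.
exists (M * K) => x _; rewrite -mulrA.
by apply: le_trans (phiM _ (TY x)) _; rewrite ler_wpM2l.
Qed.

(* Induction on the number of generators: [Y + C w] is again closed of finite
   codimension, and the [w]-coordinate on it extends to [X] through the
   projection onto [Y + C w] given by the induction hypothesis. *)
Lemma finite_codim_projection {n} {Y : set X} {v : 'I_n -> X} :
  is_subspace Y -> closed Y ->
  (forall x, exists y c, Y y /\ x = y + \sum_(i < n) c i *: v i) ->
  exists c : 'I_n -> X -> C, (forall i, dual_on setT (c i)) /\
    forall x, Y (x - \sum_i c i x *: v i).
Proof.
elim: n Y v => [|n IH] Y v sY cY Yv.
  exists (fun _ _ => 0); split; first by case.
  by move=> x; have [y [c [Yy ->]]] := Yv x; rewrite !big_ord0 addr0 subr0.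
pose w := v ord0; pose v' (i : 'I_n) := v (lift ord0 i).
have [cY' [phi [dphi phiY]]] := line_sum_complement w sY cY.
have Y'v' x : exists y c, line_sum Y w y /\ x = y + \sum_(i < n) c i *: v' i.
  have [y [c [Yy ->]]] := Yv x; exists (y + c ord0 *: w), (fun i => c (lift ord0 i)).
  by split; [exists y, (c ord0) | rewrite big_ord_recl addrA].
have [c' [dc' Y'c']] := IH _ v' (line_sum_subspace sY) cY' Y'v'.
pose T x := x - \sum_i c' i x *: v' i.
have Tl (a : C) x y : T (a *: x + y) = a *: T x + T y.
  by apply: sub_sum_coef_linear => i; case: (dc' i).
have [K [_ TK]] := sum_coef_bound v' dc'.
exists (fun i => if unlift ord0 i is Some j then c' j else fun x => phi (T x)).
split => [i|x].
  by case: (unlift ord0 i) => [j|]; [exact: dc' | exact: dual_on_comp dphi Y'c' Tl TK].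
rewrite big_ord_recl unlift_none.
under [X in _ - (_ + X)]eq_bigr => i _ do rewrite liftK.
by rewrite opprD addrCA addrC; apply: phiY.
Qed.

End Complements.

Section ClusterToFibers.
Context {R : realType} {X : completeNormedModType R[i]}.
Local Notation C := R[i].

Lemma shrink_into_ball {x : X} (p : X) : `|x| < 1 ->
  `|(1 + `|p|)^-1 *: (x - p)| < 1 /\
  `|(1 + `|p|)^-1 *: (x - p) - x| <= `|p| + `|p|.
Proof.
move=> x1; have p10 : 0 < 1 + `|p| by rewrite ltr_pwDl.
have xp1 : `|x - p| < 1 + `|p| by apply: le_lt_trans (ler_normB _ _) _; rewrite ltrD2r.
split; first by rewrite normrZ gtr0_norm ?invr_gt0 // mulrC ltr_pdivrMr // mul1r.
set s := (1 + `|p|)^-1.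
have -> : s *: (x - p) - x = (s - 1) *: (x - p) - p.
  by rewrite scalerBl scale1r -addrA -opprD subrK.
have -> : s - 1 = - (`|p| / (1 + `|p|)) by rewrite /s; field; rewrite lt0r_neq0.
apply: le_trans (ler_normB _ _) _; rewrite lerD2r normrZ normrN.
rewrite normrM normfV !ger0_norm ?(ltW p10) // -mulrA -[leRHS]mulr1.
by apply: ler_wpM2l => //; rewrite mulrC ler_pdivrMr // mul1r ltW.
Qed.

Lemma character_of_ultralimits {I : Type} {F : set_system I} {Y : set X}
    {y : I -> X} {f : X -> C} {lam : C} :
  ProperFilter F -> (forall i, ball_of Y (y i)) ->
  (forall z, dual_on Y z -> ulim F (fun i => z (y i)) 0) ->
  ulim F (fun i => f (y i)) lam ->
  exists tau, M0 Y tau /\ tau f = lam.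
Proof.
move=> PF yB zy fy; have [U [UU sU]] := ultraFilterLemma PF.
have PU : ProperFilter U by case: UU.
have toU (h : I -> C) (l : C) : ulim F h l -> ulim U h l by move=> hl e /hl /sU.
pose tau (g : X -> C) : C := xget 0 (ulim U (fun i => g (y i))).
have tauE (g : X -> C) (l : C) : ulim U (fun i => g (y i)) l -> tau g = l.
  by move=> gl; apply: (ulim_unique _ gl); apply: xgetPex; exists l.
have tauP (g : X -> C) : in_Au Y g -> ulim U (fun i => g (y i)) (tau g).
  move=> [_ [M gM] _]; have [l gl] := ulim_bounded UU (fun i => gM _ (yB i)).
  by rewrite (tauE _ _ gl).
exists tau; split; last exact/tauE/toU.
split; last by move=> z /zy /toU /tauE.
split.
- move=> g h Ag Ah gh; rewrite /tau.
  by congr xget; apply: funext => l; congr ulim; apply: funext => i; apply: gh.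
- by move=> a g h Ag Ah; apply: tauE; apply: ulim_lin; apply: tauP.
- move=> g h Ag Ah; have [_ [M gM] _] := Ag.
  by apply: tauE; apply: (ulim_mul (fun i => gM _ (yB i))); apply: tauP.
- exists (fun _ => 1); split; first exact: Au_cst.
  by rewrite (tauE (fun _ => 1) 1 (ulim_cst 1)); apply/eqP; rewrite oner_neq0.
Qed.

Lemma fibers_of_cluster_set (f : X -> C) (lam : C) :
  in_Au setT f -> cluster_set_0 f lam ->
  forall Y : set X, is_subspace Y -> closed Y -> finite_codim Y ->
    exists tau, M0 Y tau /\ tau f = lam.
Proof.
move=> [_ _ f_unif] [J [le [x [[i0] [le_refl [le_trans [le_dir [xB [xw xf]]]]]]]]].
move=> Y sY cY [n [v Yv]].
pose F := filter_from setT (fun j => [set i | le j i]).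
have FF : Filter F.
  apply: filter_from_filter; first by exists i0.
  move=> a b _ _; have [k [ak bk]] := le_dir a b; exists k => // i ki.
  by split; [exact: le_trans ak ki | exact: le_trans bk ki].
have PF : ProperFilter F by apply: filter_from_proper => j _; exists j.
have eventually (A : J -> Prop) : (exists j, forall i, le j i -> A i) ->
    F [set i | A i] by move=> [j Aj]; exists j.
have [c [dc Yc]] := finite_codim_projection sY cY Yv.
pose P u := \sum_j c j u *: v j.
have Px_small e : 0 < e -> F [set i | `|P (x i)| < e].
  move=> e0; pose S := \sum_j `|v j|.
  have S10 : 0 < S + 1 by rewrite ltr_pwDr // sumr_ge0.
  have eS0 : 0 < e / (S + 1) by rewrite divr_gt0.
  have cx_small : F [set i | forall j, `|c j (x i)| < e / (S + 1)].
    apply: (@filter_forall J _ (fun j i => `|c j (x i)| < e / (S + 1)) F FF) => j.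
    by apply: eventually; apply: xw.
  apply: filterS cx_small => i /= cx.
  apply: le_lt_trans (ler_norm_sum _ _ _) _.
  apply: le_lt_trans (_ : _ <= \sum_j e / (S + 1) * `|v j|) _.
    by apply: ler_sum => j _; rewrite normrZ ler_wpM2r // ltW.
  rewrite -mulr_sumr -/S mulrAC ltr_pdivrMr // ltr_pM2l //.
  by rewrite ltrDl.
pose y i := (1 + `|P (x i)|)^-1 *: (x i - P (x i)).
have yB i : ball_of Y (y i).
  split; first by case: (shrink_into_ball (P (x i)) (xB i)).
  by have [Y0 Ys] := sY; rewrite /y -[_ *: _]addr0; apply: Ys.
have yx_small e : 0 < e -> F [set i | `|y i - x i| < e].
  move=> e0; have e20 : 0 < e / 2 by rewrite divr_gt0.
  apply: filterS (Px_small _ e20) => i /= Pxe.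
  have [_ yx] := shrink_into_ball (P (x i)) (xB i).
  by apply: le_lt_trans yx _; rewrite (splitr e) ltrD.
apply: (character_of_ultralimits PF yB).
  move=> z dz e e0; have [zl _] := dz; have [K [_ QK]] := sum_coef_bound v dc.
  have Ql (a : C) u w : (a *: u + w) - P (a *: u + w) = a *: (u - P u) + (w - P w).
    by apply: sub_sum_coef_linear => j; case: (dc j).
  have zQ := dual_on_comp dz Yc Ql QK.
  apply: filterS (eventually _ (xw _ zQ e e0)) => i /=.
  have [Y0 _] := sY.
  rewrite subr0 /y -[_ *: _]addr0 (zl _ _ _ (Yc _) Y0) (linear_on0 Y0 zl) addr0.
  rewrite normrM ger0_norm ?invr_ge0 ?addr_ge0 //; apply: le_lt_trans.
  by rewrite ler_piMl // invf_le1 ?ltr_pwDl // lerDl.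
move=> e e0; have e20 : 0 < e / 2 by rewrite divr_gt0.
have [d [d0 fd]] := f_unif _ e20.
apply: filterS (filterI (yx_small _ d0) (eventually _ (xf _ e20))) => i /= [yx fx].
apply: le_lt_trans (ler_distD (f (x i)) _ _) _; rewrite (splitr e) ltrD //.
have [yiB _] := yB i.
exact: (fd _ _ (conj yiB I) (conj (xB i) I) yx).
Qed.

End ClusterToFibers.

Theorem proposition2p6 (R : realType) (X : completeNormedModType R[i])
  (f : X -> R[i]) :
  in_Au setT f ->
  forall lam : R[i],
    cluster_set_0 f lam <->
    (forall Y : set X, is_subspace Y -> closed Y -> finite_codim Y ->
       exists tau, M0 Y tau /\ tau f = lam).
Proof.
move=> Af lam; split; first exact: fibers_of_cluster_set.
exact: cluster_set_of_fibers.
Qed.
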